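(* For every positive integer $n$, $|S_n(T\cup\{\tau\})|=n$ in the following cases: (1) $T=\{123,132,231\}$ and $\tau\in S_4$ contains at least one permutation in $T$; (2) $T=\{123,132,213\}$ and $\tau=3412$.
   Context: Permutations are written in one-line notation. A permutation $\sigma\in S_n$ contains $\pi\in S_m$ if there are indices $i_1<\dots<i_m$ such that for all $j<l$, $\sigma_{i_j}<\sigma_{i_l}$ iff $\pi_j<\pi_l$; otherwise $\sigma$ avoids $\pi$. For a set $A$ of patterns, $S_n(A)$ is the set of permutations in $S_n$ avoiding every pattern in $A$. *)

From mathcomp Require Import all_boot perm.
Set Implicit Arguments. Unset Strict Implicit. Unset Printing Implicit Defensive.

Definition occurs (n m : nat) (w : 'I_n -> nat) (p : 'I_m -> nat) : bool :=
  [exists f : {ffun 'I_m -> 'I_n},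
    [forall j : 'I_m, forall l : 'I_m,
       (j < l) ==> ((f j < f l) && ((w (f j) < w (f l)) == (p j < p l)))]].

Definition oneline (n : nat) (s : 'S_n) : 'I_n -> nat := fun i => val (s i).

Definition patw (p : seq nat) : 'I_(size p) -> nat := fun i => nth 0 p i.

Definition contains (n : nat) (s : 'S_n) (p : seq nat) : bool :=
  occurs (@oneline n s) (@patw p).

Definition avoids (n : nat) (s : 'S_n) (p : seq nat) : bool := ~~ contains s p.

Definition Av (n : nat) (A : seq (seq nat)) : {set 'S_n} :=
  [set s : 'S_n | all (avoids s) A].

Definition perm_seq (m : nat) (t : 'S_m) : seq nat := [seq (t i).+1 | i <- enum 'I_m].

From mathcomp Require Import all_boot perm zify.
Set Implicit Arguments. Unset Strict Implicit. Unset Printing Implicit Defensive.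

(* A permutation is determined by its noninversions, the pairs of positions
   i < j with s i < s j, since they give the rank s i = #{j | s j < s i}.

   (1) If s avoids 123 and 132, every entry after a noninversion (i, j) lies
   below s i; if s also avoids 231, a noninversion (i, j) with j not the last
   position would combine with the last entry into a 231.  So the first n - 1
   entries of s decrease, its noninversions are the pairs (i, n - 1) with
   i >= n - 1 - s (n - 1), and s is determined by its last entry, which can be
   anything.  Conversely such an s avoids every pattern starting with an
   ascent, hence T and, since tau contains a pattern of T, also tau.

   (2) An occurrence of a pattern injects its noninversions into those of s,
   and each of 123, 132, 213, 3412 has two noninversions; conversely two
   distinct noninversions of s produce one of these four patterns.  So the
   avoiders are the permutations with at most one noninversion.  Such a
   noninversion joins adjacent positions, which leaves the decreasing
   permutation and the n - 1 ones obtained by swapping two adjacent entries. *)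

Lemma leq_add_decr (f : nat -> nat) i j :
  i <= j -> (forall k, i <= k < j -> f k.+1 < f k) -> f j + (j - i) <= f i.
Proof.
elim: j => [|j IHj]; first by rewrite leqn0 => /eqP ->; rewrite addn0.
rewrite leq_eqVlt => /predU1P [<- | ij] f_decr; first by rewrite subnn addn0.
have IH : f j + (j - i) <= f i by apply: IHj => // k /andP [ik kj]; rewrite f_decr // ik ltnW.
have := f_decr j; rewrite -ltnS ij leqnn => /(_ isT); lia.
Qed.

Lemma occursP m n (w : 'I_n -> nat) (p : 'I_m -> nat) :
  reflect (exists f : 'I_m -> 'I_n, forall j l : 'I_m, j < l ->
             (f j < f l) && ((w (f j) < w (f l)) == (p j < p l)))
          (occurs w p).
Proof.
apply: (iffP existsP) => [[f /forallP occ_f] | [f occ_f]].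
  by exists f => j l jl; move/forallP/(_ l)/implyP: (occ_f j); apply.
exists [ffun j => f j]; apply/forallP => j; apply/forallP => l.
by apply/implyP => /occ_f; rewrite !ffunE.
Qed.

Lemma occurs_trans k m n (u : 'I_n -> nat) (v : 'I_m -> nat) (w : 'I_k -> nat) :
  occurs u v -> occurs v w -> occurs u w.
Proof.
case/occursP => f occ_f /occursP [g occ_g]; apply/occursP; exists (f \o g) => j l jl /=.
by have /andP [gjl /eqP <-] := occ_g j l jl; apply: occ_f.
Qed.

Lemma occurs_perm_seq m (tau : 'S_m) : occurs (@patw (perm_seq tau)) (oneline tau).
Proof.
have size_tau : size (perm_seq tau) = m by rewrite size_map size_enum_ord.
have tauE (a : 'I_m) : @patw (perm_seq tau) (cast_ord (esym size_tau) a) = (tau a).+1.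
  by rewrite /patw /= (nth_map a) ?size_enum_ord // nth_ord_enum.
apply/occursP; exists (cast_ord (esym size_tau)) => j l jl.
by rewrite /= jl !tauE ltnS; apply: eqxx.
Qed.

Lemma contains_trans m n (s : 'S_n) (tau : 'S_m) p :
  contains s (perm_seq tau) -> contains tau p -> contains s p.
Proof. by move=> /occurs_trans/(_ (occurs_perm_seq tau)); apply: occurs_trans. Qed.

Lemma occurs3P n (w : 'I_n -> nat) x y z :
  reflect (exists a b c : 'I_n,
             [/\ a < b < c, (w a < w b) = (x < y), (w a < w c) = (x < z)
               & (w b < w c) = (y < z)])
          (occurs w (@patw [:: x; y; z])).
Proof.
apply: (iffP (occursP _ _)) => [[f occ_f] | [a [b [c [/andP [ab bc] wab wac wbc]]]]].
  move: (occ_f (@Ordinal 3 0 isT) (@Ordinal 3 1 isT) isT)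
        (occ_f (@Ordinal 3 0 isT) (@Ordinal 3 2 isT) isT)
        (occ_f (@Ordinal 3 1 isT) (@Ordinal 3 2 isT) isT).
  move=> /andP [ab /eqP wab] /andP [_ /eqP wac] /andP [bc /eqP wbc].
  by exists (f (@Ordinal 3 0 isT)), (f (@Ordinal 3 1 isT)), (f (@Ordinal 3 2 isT));
    rewrite ab bc.
exists (fun j : 'I_3 => nth a [:: a; b; c] j).
by move=> [[|[|[|?]]] ?] [[|[|[|?]]] ?] //= _;
  rewrite ?ab ?bc ?(ltn_trans ab bc) ?wab ?wac ?wbc /patw /=.
Qed.

Lemma occurs4 n (w : 'I_n -> nat) x y z t (a b c d : 'I_n) :
  a < b -> b < c -> c < d ->
  (w a < w b) = (x < y) -> (w a < w c) = (x < z) -> (w a < w d) = (x < t) ->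
  (w b < w c) = (y < z) -> (w b < w d) = (y < t) -> (w c < w d) = (z < t) ->
  occurs w (@patw [:: x; y; z; t]).
Proof.
move=> ab bc cd wab wac wad wbc wbd wcd.
have ac := ltn_trans ab bc; have bd := ltn_trans bc cd; have ad := ltn_trans ac cd.
apply/occursP; exists (fun j : 'I_4 => nth a [:: a; b; c; d] j).
by move=> [[|[|[|[|?]]]] ?] [[|[|[|[|?]]]] ?] //= _;
  rewrite ?ab ?bc ?cd ?ac ?bd ?ad ?wab ?wac ?wad ?wbc ?wbd ?wcd /patw /=.
Qed.

Definition noninversions n (w : 'I_n -> nat) : {set 'I_n * 'I_n} :=
  [set p : 'I_n * 'I_n | (p.1 < p.2) && (w p.1 < w p.2)].

Lemma mem_noninversions n (s : 'S_n) (i j : 'I_n) :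
  ((i, j) \in noninversions (oneline s)) = (i < j) && (s i < s j).
Proof. by rewrite inE. Qed.

Lemma card_noninversions_occurs m n (w : 'I_n -> nat) (p : 'I_m -> nat) :
  occurs w p -> #|noninversions p| <= #|noninversions w|.
Proof.
case/occursP => f occ_f.
have f_mono (j l : 'I_m) : j < l -> f j < f l by move=> /occ_f /andP [].
have f_inj : injective f.
  move=> j l; case: (ltngtP j l) => [/f_mono | /f_mono | /val_inj //] + fjl;
    by rewrite fjl ltnn.
pose f2 (q : 'I_m * 'I_m) := (f q.1, f q.2).
have f2_inj : injective f2 by move=> [j l] [j' l'] [/f_inj -> /f_inj ->].
rewrite -(card_imset _ f2_inj); apply/subset_leq_card/subsetP => _ /imsetP [[j l] + ->].
rewrite !inE /= => /andP [jl pjl].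
by have /andP [-> /eqP ->] := occ_f j l jl.
Qed.

Lemma avoids_of_card_noninversions n (s : 'S_n) p :
  #|noninversions (oneline s)| < #|noninversions (@patw p)| -> avoids s p.
Proof. by rewrite ltnNge; apply: contra; apply: card_noninversions_occurs. Qed.

Lemma card_ord_lt n k : k <= n -> #|[set i : 'I_n | i < k]| = k.
Proof.
move=> kn; have -> : [set i : 'I_n | i < k] = widen_ord kn @: setT.
  apply/setP => i; rewrite inE; apply/idP/imsetP => [ik | [j _ ->]]; last exact: (ltn_ord j).
  by exists (Ordinal ik) => //; apply: val_inj.
by rewrite card_imset ?cardsT ?card_ord // => i j [/val_inj].
Qed.

Lemma perm_rank n (s : 'S_n) i : val (s i) = #|[set j | s j < s i]|.
Proof.
have -> : [set j | s j < s i] = s @^-1: [set y : 'I_n | y < s i].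
  by apply/setP => j; rewrite !inE.
by rewrite card_preimset ?card_ord_lt //; [apply: ltnW | apply: perm_inj].
Qed.

Lemma perm_ltNgt n (s : 'S_n) i j : i != j -> (s i < s j) = ~~ (s j < s i).
Proof.
move=> ij; have : s i != s j :> nat by rewrite val_eqE (inj_eq perm_inj).
lia.
Qed.

Lemma noninversions_perm_inj n (s t : 'S_n) :
  noninversions (oneline s) = noninversions (oneline t) -> s = t.
Proof.
move=> st.
have lt_st (i j : 'I_n) : i < j -> (s i < s j) = (t i < t j).
  move=> ij; have := mem_noninversions s i j.
  by rewrite st mem_noninversions ij => /esym.
have {}lt_st (i j : 'I_n) : (s i < s j) = (t i < t j).
  case: (ltngtP i j) => [/lt_st // | ji | /val_inj ->]; last by rewrite !ltnn.
  have ij : i != j by rewrite neq_ltn ji orbT.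
  by rewrite perm_ltNgt // [t i < _]perm_ltNgt // lt_st.
apply/permP => i; apply: val_inj; rewrite (perm_rank s) (perm_rank t); apply: eq_card => j.
by rewrite !inE lt_st.
Qed.

Lemma noninversion_tail_lt n (s : 'S_n) (i j k : 'I_n) :
  avoids s [:: 1; 2; 3] -> avoids s [:: 1; 3; 2] ->
  (i, j) \in noninversions (oneline s) -> j < k -> s k < s i.
Proof.
move=> /negP s123 /negP s132; rewrite mem_noninversions => /andP [ij sij] jk.
have ki : k != i by rewrite neq_ltn (ltn_trans ij jk) orbT.
rewrite perm_ltNgt //; apply/negP => sik.
have [sjk | skj] := boolP (s j < s k).
  by apply: s123; apply/occurs3P; exists i, j, k; rewrite ij jk /oneline /= sij sik sjk.
by apply: s132; apply/occurs3P; exists i, j, k; rewrite ij jk /oneline /= sij sik (negbTE skj).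
Qed.

Section PermOfNat.
Variables (n : nat) (f : nat -> nat).
Hypotheses (f_lt : forall i, i < n -> f i < n)
           (f_inj : forall i j, i < n -> j < n -> f i = f j -> i = j).

Definition ord_of_nat_fun (i : 'I_n) : 'I_n := Ordinal (f_lt (ltn_ord i)).

Lemma ord_of_nat_fun_inj : injective ord_of_nat_fun.
Proof. by move=> i j [/f_inj eq_ij]; apply: val_inj; apply: eq_ij. Qed.

Definition perm_of_nat : 'S_n := perm ord_of_nat_fun_inj.

Lemma perm_of_natE i : val (perm_of_nat i) = f i.
Proof. by rewrite permE. Qed.

End PermOfNat.

Section DecreasingPrefix.
Variable m : nat.
Implicit Types (s : 'S_m.+1) (v : 'I_m.+1).

Definition dec_prefix_perms : {set 'S_m.+1} :=
  [set s | noninversions (oneline s) \subset [set p | p.2 == ord_max]].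

Lemma dec_prefix_lt s (i j : 'I_m.+1) :
  s \in dec_prefix_perms -> i < j -> j < m -> s j < s i.
Proof.
move=> s_dec ij jm; have ji : j != i by rewrite neq_ltn ij orbT.
rewrite perm_ltNgt //; apply/negP => sij; move: s_dec; rewrite inE => /subsetP /(_ (i, j)).
by rewrite mem_noninversions ij sij inE -val_eqE /= ltn_eqF // => /(_ isT).
Qed.

Lemma dec_prefix_bounds s (i : 'I_m.+1) :
  s \in dec_prefix_perms -> i < m -> m.-1 - i <= s i <= m - i.
Proof.
move=> s_dec im; pose f k := val (s (inord k)).
have f_decr k : k.+1 < m -> f k.+1 < f k.
  by move=> km; apply: dec_prefix_lt; rewrite // !inordK //; lia.
have fi : f i = s i by rewrite /f inord_val.
have upper : f i + (i - 0) <= f 0.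
  by apply: leq_add_decr => // k /andP [_ ki]; apply: f_decr; lia.
have lower : f m.-1 + (m.-1 - i) <= f i.
  by apply: leq_add_decr => [|k /andP [_ km]]; [lia | apply: f_decr; lia].
have := ltn_ord (s (inord 0)); rewrite -/(f 0); lia.
Qed.

Definition last_noninversions v : {set 'I_m.+1 * 'I_m.+1} :=
  [set p : 'I_m.+1 * 'I_m.+1 | (p.2 == ord_max) && (m - v <= p.1 < m)].

Lemma noninversions_dec_prefix s :
  s \in dec_prefix_perms -> noninversions (oneline s) = last_noninversions (s ord_max).
Proof.
move=> s_dec; apply/setP => -[i j]; rewrite mem_noninversions inE /=.
have [-> | jmax] := eqVneq j ord_max; last first.
  apply/negbTE/negP => /andP [ij sij]; move: s_dec; rewrite inE => /subsetP /(_ (i, j)).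
  by rewrite mem_noninversions ij sij inE (negbTE jmax) => /(_ isT).
case: (ltnP i m) => [im | _]; last by rewrite andbF.
have : s i != s ord_max :> nat by rewrite val_eqE (inj_eq perm_inj) -val_eqE /= neq_ltn im.
have := dec_prefix_bounds s_dec im; have := ltn_ord (s ord_max); rewrite andbT; lia.
Qed.

(* The elements of {0, ..., m} other than v in decreasing order, then v. *)
Definition dec_prefix_val v i :=
  if i < m then (if v < m - i then m - i else m.-1 - i) else v.

Lemma dec_prefix_val_lt v i : i < m.+1 -> dec_prefix_val v i < m.+1.
Proof. by rewrite /dec_prefix_val; have := ltn_ord v; repeat case: ifP; lia. Qed.

Lemma dec_prefix_val_inj v i j :
  i < m.+1 -> j < m.+1 -> dec_prefix_val v i = dec_prefix_val v j -> i = j.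
Proof. by rewrite /dec_prefix_val; have := ltn_ord v; repeat case: ifP; lia. Qed.

Definition dec_prefix_perm v : 'S_m.+1 :=
  perm_of_nat (@dec_prefix_val_lt v) (@dec_prefix_val_inj v).

Lemma dec_prefix_perm_last v : dec_prefix_perm v ord_max = v.
Proof. by apply: val_inj; rewrite perm_of_natE /dec_prefix_val ltnn. Qed.

Lemma noninversions_dec_prefix_perm v :
  noninversions (oneline (dec_prefix_perm v)) = last_noninversions v.
Proof.
apply/setP => -[i j]; rewrite mem_noninversions inE -val_eqE /= !perm_of_natE.
rewrite /dec_prefix_val; have := ltn_ord i; have := ltn_ord j; have := ltn_ord v.
by repeat case: ifP; lia.
Qed.

Lemma dec_prefix_permsE : dec_prefix_perms = dec_prefix_perm @: setT.
Proof.
apply/setP => s; apply/idP/imsetP => [s_dec | [v _ ->]].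
  exists (s ord_max) => //; apply: noninversions_perm_inj.
  by rewrite noninversions_dec_prefix_perm noninversions_dec_prefix.
rewrite inE noninversions_dec_prefix_perm; apply/subsetP => p.
by rewrite !inE => /andP [].
Qed.

Lemma card_dec_prefix_perms : #|dec_prefix_perms| = m.+1.
Proof.
rewrite dec_prefix_permsE card_imset ?cardsT ?card_ord //.
exact: (can_inj (g := fun s => s ord_max) dec_prefix_perm_last).
Qed.

Lemma dec_prefix_avoids s x y z :
  s \in dec_prefix_perms -> x < y -> avoids s [:: x; y; z].
Proof.
move=> s_dec xy; apply/occurs3P => -[a [b [c [/andP [ab bc] sab _ _]]]].
have bm : b < m by have := ltn_ord c; lia.
by move: sab; rewrite xy /oneline /= ltnNge ltnW // dec_prefix_lt.
Qed.

Lemma Av_dec_prefix (tau : 'S_4) :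
  has (contains tau) [:: [:: 1; 2; 3]; [:: 1; 3; 2]; [:: 2; 3; 1]] ->
  Av m.+1 [:: [:: 1; 2; 3]; [:: 1; 3; 2]; [:: 2; 3; 1]; perm_seq tau] = dec_prefix_perms.
Proof.
move=> tau_T; apply/setP => s; rewrite inE /= andbT.
apply/idP/idP => [/and4P [s123 s132 s231 _] | s_dec].
  rewrite inE; apply/subsetP => -[i j]; rewrite mem_noninversions inE /= => /andP [ij sij].
  apply/negPn/negP => jmax; have jm : j < @ord_max m.
    by move: jmax; rewrite -val_eqE /=; have := ltn_ord j; lia.
  have smi : s ord_max < s i.
    by apply: noninversion_tail_lt s123 s132 _ jm; rewrite mem_noninversions ij sij.
  have smj := ltn_trans smi sij.
  case/negP: s231; apply/occurs3P; exists i, j, ord_max.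
  by rewrite ij jm /oneline /= sij (leq_gtF (ltnW smi)) (leq_gtF (ltnW smj)).
rewrite !dec_prefix_avoids //=; apply/negP => /contains_trans s_tau.
case/hasP: tau_T => p; rewrite !inE => /or3P [] /eqP -> /s_tau; exact/negP/dec_prefix_avoids.
Qed.

End DecreasingPrefix.

Definition le1_noninversion_perms n : {set 'S_n} :=
  [set s | #|noninversions (oneline s)| <= 1].

Lemma le1_noninversions_of_avoids n (s : 'S_n) :
  avoids s [:: 1; 2; 3] -> avoids s [:: 1; 3; 2] -> avoids s [:: 2; 1; 3] ->
  avoids s [:: 3; 4; 1; 2] -> #|noninversions (oneline s)| <= 1.
Proof.
move=> s123 s132 /negP s213 /negP s3412; apply/card_le1_eqP => -[i j] [k l].
wlog ik : i j k l / i <= k.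
  move=> le_eq ij kl; case: (leqP i k) => [/le_eq | /ltnW /le_eq]; first exact.
  by move=> /(_ l j kl ij) ->.
have tail := noninversion_tail_lt s123 s132.
move=> ij_ni kl_ni; move: (ij_ni) (kl_ni).
rewrite !mem_noninversions => /andP [ij sij] /andP [kl skl].
case: (ltngtP i k) => [lt_ik | ki | /val_inj eq_ik]; last first.
- subst k; case: (ltngtP j l) => [jl | lj | /val_inj -> //]; exfalso.
    by have := tail _ _ _ ij_ni jl; lia.
  by have := tail _ _ _ kl_ni lj; lia.
- by exfalso; lia.
exfalso; case: (ltngtP k j) => [kj | jk | /val_inj eq_kj].
- have [sik | ski] := boolP (s i < s k).
    have ik_ni : (i, k) \in noninversions (oneline s) by rewrite mem_noninversions lt_ik.
    by have := tail _ _ _ ik_ni kj; lia.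
  rewrite -perm_ltNgt ?neq_ltn ?lt_ik ?orbT // in ski.
  apply: s213; apply/occurs3P; exists i, k, j.
  by rewrite lt_ik kj /oneline /= sij (ltn_trans ski sij) (leq_gtF (ltnW ski)).
- have ski := tail _ _ _ ij_ni jk; have sli := tail _ _ _ ij_ni (ltn_trans jk kl).
  by apply: s3412; apply: (occurs4 ij jk kl); rewrite /oneline /=; lia.
- subst k; have := tail _ _ _ ij_ni kl; lia.
Qed.

Lemma Av_le1_noninversions n :
  Av n [:: [:: 1; 2; 3]; [:: 1; 3; 2]; [:: 2; 1; 3]; [:: 3; 4; 1; 2]] =
  le1_noninversion_perms n.
Proof.
apply/setP => s; rewrite !inE /= andbT; apply/idP/idP => [/and4P [] | s_le1].
  exact: le1_noninversions_of_avoids.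
have avoids_pat p : 1 < #|noninversions (@patw p)| -> avoids s p.
  by move=> two; apply: avoids_of_card_noninversions; apply: leq_trans two.
apply/and4P; split; apply: avoids_pat; apply/card_gt1P.
- by exists (@Ordinal 3 0 isT, @Ordinal 3 1 isT),
           (@Ordinal 3 1 isT, @Ordinal 3 2 isT); rewrite !inE.
- by exists (@Ordinal 3 0 isT, @Ordinal 3 1 isT),
           (@Ordinal 3 0 isT, @Ordinal 3 2 isT); rewrite !inE.
- by exists (@Ordinal 3 0 isT, @Ordinal 3 2 isT),
           (@Ordinal 3 1 isT, @Ordinal 3 2 isT); rewrite !inE.
- by exists (@Ordinal 4 0 isT, @Ordinal 4 1 isT),
           (@Ordinal 4 2 isT, @Ordinal 4 3 isT); rewrite !inE.
Qed.

Lemma noninversion_adjacent n (s : 'S_n) (i j : 'I_n) :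
  s \in le1_noninversion_perms n -> (i, j) \in noninversions (oneline s) -> j = i.+1 :> nat.
Proof.
rewrite inE => /card_le1_eqP s_le1 ij_ni.
have /andP [ij sij] : (i < j) && (s i < s j) by rewrite -mem_noninversions.
case: (ltngtP j i.+1) => [| ji | //]; first by lia.
have c_lt : i.+1 < n by have := ltn_ord j; lia.
pose c := Ordinal c_lt.
have [sic | sci] := boolP (s i < s c).
  have ic_ni : (i, c) \in noninversions (oneline s) by rewrite mem_noninversions /= ltnSn.
  by case: (s_le1 _ _ ij_ni ic_ni) => /(congr1 val) /=; lia.
have {}sci : s c < s i by rewrite perm_ltNgt // -val_eqE /= neq_ltn ltnSn orbT.
have cj_ni : (c, j) \in noninversions (oneline s).
  by rewrite mem_noninversions ji (ltn_trans sci sij).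
by case: (s_le1 _ _ ij_ni cj_ni) => /(congr1 val) /=; lia.
Qed.

Section AdjacentSwaps.
Variable m : nat.
Implicit Types (k : 'I_m.+1).

(* The decreasing permutation m, m-1, ..., 0 with its entries at positions
   k.-1 and k exchanged; for k = 0 no entry moves. *)
Definition swap_val k i := if i == k.-1 then m - k else if i == k then (m - k).+1 else m - i.

Lemma swap_val_lt k i : i < m.+1 -> swap_val k i < m.+1.
Proof. by rewrite /swap_val; have := ltn_ord k; repeat case: ifP => /eqP; lia. Qed.

Lemma swap_val_inj k i j :
  i < m.+1 -> j < m.+1 -> swap_val k i = swap_val k j -> i = j.
Proof. by rewrite /swap_val; have := ltn_ord k; repeat case: ifP => /eqP; lia. Qed.

Definition swap_perm k : 'S_m.+1 := perm_of_nat (@swap_val_lt k) (@swap_val_inj k).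

Lemma noninversions_swap_perm k :
  noninversions (oneline (swap_perm k)) =
  [set p : 'I_m.+1 * 'I_m.+1 | (p.1.+1 == p.2) && (p.2 == k)].
Proof.
apply/setP => -[i j]; rewrite mem_noninversions inE -val_eqE /= !perm_of_natE /swap_val.
by have := ltn_ord i; have := ltn_ord j; have := ltn_ord k; repeat case: ifP => /eqP; lia.
Qed.

Lemma swap_perm_inj : injective swap_perm.
Proof.
move=> k k'; wlog le_kk' : k k' / k <= k'.
  move=> le_inj E; case: (leqP k k') => [/le_inj/(_ E) // | /ltnW/le_inj].
  by move=> /(_ (esym E)) ->.
move/(congr1 (fun s => noninversions (oneline s))); rewrite !noninversions_swap_perm.
case: (posnP k') => [k'0 | k'_gt0 E]; first by move=> _; apply: ord_inj; lia.
have : (inord k'.-1, k') \in [set p : 'I_m.+1 * 'I_m.+1 | (p.1.+1 == p.2) && (p.2 == k')].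
  by rewrite inE /= inordK ?prednK ?eqxx //; have := ltn_ord k'; lia.
by rewrite -E inE /= => /andP [_ /eqP].
Qed.

Lemma le1_noninversion_permsE : le1_noninversion_perms m.+1 = swap_perm @: setT.
Proof.
apply/setP => s; apply/idP/imsetP => [s_le1 | [k _ ->]]; last first.
  rewrite inE noninversions_swap_perm; apply/card_le1_eqP => -[i j] [i' j'].
  rewrite !inE -!val_eqE /= => /andP [/eqP ij /eqP jk] /andP [/eqP ij' /eqP jk'].
  by congr pair; apply: ord_inj; lia.
case: (set_0Vmem (noninversions (oneline s))) => [no_ni | [[a b] ab_ni]].
  exists ord0 => //; apply: noninversions_perm_inj; rewrite no_ni noninversions_swap_perm.
  by apply/setP => -[i j]; rewrite !inE -val_eqE /=; lia.
exists b => //; apply: noninversions_perm_inj; rewrite noninversions_swap_perm.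
have ba := noninversion_adjacent s_le1 ab_ni.
move: s_le1; rewrite inE => /card_le1P /(_ _ ab_ni) s_ab.
by apply/setP => -[i j]; rewrite s_ab !inE xpair_eqE -!val_eqE /=; lia.
Qed.

Lemma card_le1_noninversion_perms : #|le1_noninversion_perms m.+1| = m.+1.
Proof.
by rewrite le1_noninversion_permsE card_imset ?cardsT ?card_ord //; apply: swap_perm_inj.
Qed.

End AdjacentSwaps.

Theorem theorem4p3 :
  forall n : nat, 0 < n ->
    (forall tau : 'S_4,
       has (contains tau) [:: [:: 1; 2; 3]; [:: 1; 3; 2]; [:: 2; 3; 1]] ->
       #|Av n [:: [:: 1; 2; 3]; [:: 1; 3; 2]; [:: 2; 3; 1]; perm_seq tau]| = n)
    /\
    #|Av n [:: [:: 1; 2; 3]; [:: 1; 3; 2]; [:: 2; 1; 3]; [:: 3; 4; 1; 2]]| = n.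
Proof.
case=> [// | m] _; split.
  by move=> tau tau_T; rewrite Av_dec_prefix // card_dec_prefix_perms.
by rewrite Av_le1_noninversions card_le1_noninversion_perms.
Qed.
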